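(* Let $n\ge3$. Let $(\mu,\Sigma)$ satisfy the normalization below, with $\operatorname{Tr}(\Sigma)=n$, and the observability assumption with parameter $\gamma\in(0,1)$. Then for every $i\in[n]$, $$\Sigma_{ii}\le\frac{100\log(8/\gamma)}{\gamma^2}.$$
   Context: Probit model: utilities $X\sim\mathcal{N}(\mu,\Sigma)$ with $\mu\in\mathbb{R}^n$ and $\Sigma$ symmetric positive semidefinite. Normalization: $\langle\mu,\mathbf 1\rangle=0$, $\Sigma\mathbf1=0$, $\operatorname{Tr}(\Sigma)=n$, and $\operatorname{rank}(\Sigma)=n-1$. Observability assumption: for all pairwise distinct $i,j,k\in[n]$, $\Pr\{X_i>X_j>X_k\}\ge\gamma$. $\log$ is the natural logarithm. *)

From HB Require Import structures.
From mathcomp Require Import all_boot all_order all_algebra.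
From mathcomp Require Import all_classical all_reals all_analysis.
Set Implicit Arguments. Unset Strict Implicit. Unset Printing Implicit Defensive.
Import Order.TTheory GRing.Theory Num.Theory.
Local Open Scope classical_set_scope.
Local Open Scope ring_scope.

(* For v = 0 it is the Dirac mass at m (the library's
   normal_prob uses a junk value for standard deviation 0, so we treat the
   degenerate case explicitly). *)
Definition gauss_law {R : realType} (m v : R) (B : set R) : \bar R :=
  if v == 0 then (\1_B m)%:E else normal_prob m (Num.sqrt v) B.

(* X = (X_0,...,X_{n-1}) is a Gaussian vector N(mu, Sigma): every linear
   combination <t, X> has law N(<t, mu>, t^T Sigma t) (standard definition,
   which covers degenerate covariance). *)
Definition is_gaussian_vector {R : realType} (d : measure_display)
  (T : measurableType d) (P : probability T R) (n : nat)
  (X : 'I_n -> {RV P >-> R}) (mu : 'I_n -> R) (Sigma : 'M[R]_n) : Prop :=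
  forall (t : 'I_n -> R) (B : set R), measurable B ->
    P [set w | B (\sum_(i < n) t i * X i w)] =
    gauss_law (\sum_(i < n) t i * mu i)
              (\sum_(i < n) \sum_(j < n) t i * Sigma i j * t j) B.

(* Suppose Sigma_ii is large.  Since Tr(Sigma) = n, two other coordinates j and
   k have variance at most 3.  Regress them on X_i: X_x = a_x X_i + Y_x with
   a_x = Sigma_xi / Sigma_ii <= 1/2 and Var Y_x <= 3.  On the event
   X_k < X_i < X_j, either X_i lies within t of the smaller of the two points
   where it crosses the conditional means of X_j and X_k, which has probability
   at most t / sqrt Sigma_ii by anti-concentration, or one of the residuals
   Y_j, Y_k deviates from its mean by t/2 in the direction the event requires,
   which has probability at most gamma/4 by the Gaussian tail bound.  For
   t^2 = 24 ln(4/gamma) the three terms add up to less than gamma, contradicting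
   observability. *)

From HB Require Import structures.
From mathcomp Require Import all_boot all_order all_algebra.
From mathcomp Require Import all_classical all_reals all_analysis.
From mathcomp Require Import measurable_realfun lra ring zify.
Import Order.TTheory GRing.Theory Num.Theory.
Local Open Scope classical_set_scope.
Local Open Scope ring_scope.

Section Comb2.
Context {R : comPzRingType} {n : nat}.
Implicit Types (x y : 'I_n) (b c : R).

Definition comb2 x y b c : 'I_n -> R :=
  fun l => b * (l == x)%:R + c * (l == y)%:R.

Definition comb2_var (S : 'M[R]_n) x y b c : R :=
  b ^+ 2 * S x x + b * c * (S x y + S y x) + c ^+ 2 * S y y.

Lemma comb2_varN (S : 'M[R]_n) x y b c :
  comb2_var S x y (- b) (- c) = comb2_var S x y b c.
Proof. by rewrite /comb2_var; ring. Qed.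

Lemma comb2_var_coord (S : 'M[R]_n) x : comb2_var S x x 1 0 = S x x.
Proof. by rewrite /comb2_var; ring. Qed.

Lemma sum_comb2 x y b c (F : 'I_n -> R) :
  \sum_(l < n) comb2 x y b c l * F l = b * F x + c * F y.
Proof.
have sum1 z : \sum_(l < n) (l == z)%:R * F l = F z.
  by under eq_bigr do rewrite mulr_natl mulrb; rewrite -big_mkcond big_pred1_eq.
rewrite -(sum1 x) -(sum1 y) !mulr_sumr -big_split /=.
by apply: eq_bigr => l _; rewrite mulrDl !mulrA.
Qed.

Lemma quad_comb2 (S : 'M[R]_n) x y b c :
  \sum_(l < n) \sum_(m < n) comb2 x y b c l * S l m * comb2 x y b c m =
  comb2_var S x y b c.
Proof.
set t := comb2 x y b c.
transitivity (\sum_(l < n) t l * (b * S l x + c * S l y)).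
  apply: eq_bigr => l _; rewrite -(sum_comb2 x y b c (S l)) mulr_sumr.
  by apply: eq_bigr => m _; rewrite /t; ring.
by rewrite sum_comb2 /comb2_var; ring.
Qed.

End Comb2.

Lemma exists_ord_neq2 {n} (a b : 'I_n) : (3 <= n)%N ->
  exists l : 'I_n, (l != a) && (l != b).
Proof.
move=> n3; have : (0 < #|~: [set a; b]|)%N.
  by have := cardsC [set a; b]; rewrite card_ord cards2; case: (a != b) => /=; lia.
by case/card_gt0P => l; rewrite !inE negb_or; exists l.
Qed.

Section SmallDiagonal.
Context {R : realFieldType} {n : nat} {f : 'I_n -> R}.
Hypotheses (n3 : (3 <= n)%N) (f_ge0 : forall l, 0 <= f l)
           (sum_f : \sum_(l < n) f l = n%:R).

Lemma two_small_besides (i : 'I_n) :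
  exists j k, [/\ j != i, k != i, j != k, f j <= 3 & f k <= 3].
Proof.
have [l0 /andP[l0i _]] := exists_ord_neq2 i i n3.
have [j /= ji j_min] := @arg_minP _ _ _ l0 [pred l | l != i] f l0i.
have [l1 l1ij] := exists_ord_neq2 i j n3.
have [k /= /andP[ki kj] k_min] :=
  @arg_minP _ _ _ l1 [pred l | (l != i) && (l != j)] f l1ij.
have fk3 : f k <= 3.
  have : n%:R * f k <= n%:R + (1 * f k + 1 * f k).
    rewrite mulr_natl -[X in f k *+ X]card_ord -sumr_const -sum_f.
    rewrite -(sum_comb2 i j 1 1 (fun=> f k)) -big_split /=.
    apply: ler_sum => l _; rewrite /comb2 !mul1r.
    have := f_ge0 k; have := f_ge0 l; have := ler0n R (l == j).
    have [->|li] := eqVneq l i; first by rewrite /= mulr1n; nra.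
    have [->|lj] := eqVneq l j; first by rewrite /= mulr1n mulr0n; nra.
    by rewrite add0r mul0r addr0 k_min // li lj.
  have : 3 <= n%:R :> R by rewrite ler_nat.
  have := f_ge0 k; nra.
exists j, k; split => //; first by rewrite eq_sym.
exact: le_trans (j_min k ki) fk3.
Qed.

End SmallDiagonal.

Section GaussLaw.
Context {R : realType}.
Implicit Types m s v W a b u x : R.

Lemma normal_peak_le s : 0 < s -> normal_peak s <= (2 * s)^-1.
Proof.
move=> s0; rewrite /normal_peak lef_pV2 ?posrE ?mulr_gt0 ?sqrtr_gt0 //; last first.
  by rewrite pmulrn_lgt0 // mulr_gt0 ?exprn_gt0 ?pi_gt0.
have s2 : 0 <= 2 * s by rewrite mulr_ge0 ?ltW.
rewrite -(ger0_norm s2) -sqrtr_sqr ler_sqrt; last first.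
  by rewrite pmulrn_lge0 // mulr_ge0 ?sqr_ge0 ?pi_ge0.
have := pi_ge2 R; have := sqr_ge0 s; rewrite -mulr_natr; nra.
Qed.

Lemma gauss_law_itv_le m v a b : 0 < v -> a <= b ->
  (gauss_law m v [set` `[a, b]] <= ((b - a) / (2 * Num.sqrt v))%:E)%E.
Proof.
move=> v0 ab; rewrite /gauss_law gt_eqF //.
have s0 : 0 < Num.sqrt v by rewrite sqrtr_gt0.
apply: (@le_trans _ _ (\int[lebesgue_measure]_(x in [set` `[a, b]])
                        (normal_peak (Num.sqrt v))%:E)%E).
  apply: ge0_le_integral => //.
  - by move=> x _; rewrite lee_fin normal_pdf_ge0.
  - by apply/measurable_EFinP/measurable_funTS; exact: measurable_normal_pdf.
  - by move=> x _; rewrite lee_fin normal_pdf_ub // gt_eqF.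
rewrite integral_cst // [X in (_ * X <= _)%E]lebesgue_measure_itv /=.
case: ifP => _; last by rewrite mule0 lee_fin divr_ge0 ?subr_ge0 // mulr_ge0 // ltW.
rewrite -EFinD -EFinM lee_fin mulrC ler_wpM2l ?subr_ge0 //.
exact: normal_peak_le.
Qed.

Lemma normal_pdf_shift_le m s u x : s != 0 -> 0 <= u -> m + u <= x ->
  normal_pdf m s x <= expR (- u ^+ 2 / (s ^+ 2 *+ 2)) * normal_pdf (m + u) s x.
Proof.
move=> s0 u0 ux; rewrite /normal_pdf (negbTE s0) mulrCA.
rewrite ler_wpM2l ?normal_peak_ge0 // /normal_fun -expRD ler_expR.
have D0 : 0 < s ^+ 2 *+ 2 by rewrite pmulrn_lgt0 // exprn_even_gt0.
rewrite -mulrDl ler_pM2r ?invr_gt0 //.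
have : 0 <= u * (x - (m + u)) by rewrite mulr_ge0 ?subr_ge0.
nra.
Qed.

Lemma gauss_law_tail_le m v W u : 0 <= v <= W -> 0 < u ->
  (gauss_law m v [set` `[(m + u)%R, +oo[] <= (expR (- u ^+ 2 / (W *+ 2)))%:E)%E.
Proof.
move=> /andP[v0 vW] u0; rewrite /gauss_law; case: eqP => [_|/eqP vn0].
  rewrite indicE memNset ?lee_fin ?expR_ge0 //= in_itv /= andbT.
  by rewrite gerDl; apply/negP; rewrite -ltNge.
have vp : 0 < v by rewrite lt_neqAle eq_sym vn0.
set s := Num.sqrt v.
have sn0 : s != 0 by rewrite gt_eqF // sqrtr_gt0.
set e := expR (- u ^+ 2 / (s ^+ 2 *+ 2)).
apply: (@le_trans _ _ (e%:E * normal_prob (m + u)%R s [set` `[(m + u)%R, +oo[])%E).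
  rewrite /normal_prob -ge0_integralZl ?lee_fin ?expR_ge0 //; last first.
  - by move=> x _; rewrite lee_fin normal_pdf_ge0.
  - by apply/measurable_EFinP/measurable_funTS; exact: measurable_normal_pdf.
  apply: ge0_le_integral => //.
  - by move=> x _; rewrite lee_fin normal_pdf_ge0.
  - by apply/measurable_EFinP/measurable_funTS; exact: measurable_normal_pdf.
  - apply/measurable_EFinP/measurable_funTS.
    by apply: measurable_funM => //; exact: measurable_normal_pdf.
  move=> x /=; rewrite in_itv /= andbT => ux.
  by rewrite lee_fin normal_pdf_shift_le // ltW.
rewrite -[X in (_ <= X)%E]mule1 lee_pmul ?lee_fin ?expR_ge0 //.
- rewrite /e ler_expR !mulNr lerN2 ler_pM2l ?exprn_gt0 // sqr_sqrtr ?(ltW vp) //.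
  have W0 : 0 < W := lt_le_trans vp vW.
  by rewrite lef_pV2 ?posrE ?pmulrn_lgt0 // ler_wMn2r.
- by apply: probability_le1; exact: measurable_itv.
Qed.

End GaussLaw.

(* Pointwise form of the argument: xi, xj, xk are values of X_i, X_j, X_k,
   aj, ak the regression coefficients and rj <= rk the crossing points. *)
Lemma middle_rank_cases {R : realFieldType} {xi xj xk mi mj mk aj ak rj rk t : R} :
  aj <= 1 / 2 -> ak <= 1 / 2 -> 0 < t -> rj <= rk ->
  (1 - aj) * rj = mj - mi -> (1 - ak) * rk = mk - mi ->
  xi < xj -> xk < xi ->
  [\/ mi + rj - t <= xi <= mi + rj + t,
      1 * mj + - aj * mi + t / 2 <= 1 * xj + - aj * xi |
      -1 * mk + ak * mi + t / 2 <= -1 * xk + ak * xi].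
Proof.
move=> aj2 ak2 t0 rjk erj erk ij ki.
have [lo|ilo] := ltP xi (mi + rj - t).
  apply: Or33.
  have : 0 <= (1 - ak) * (mi + rj - t - xi) by apply: mulr_ge0; lra.
  have : 0 <= (1 - ak) * (rk - rj) by apply: mulr_ge0; lra.
  have : 0 <= t * (1 / 2 - ak) by apply: mulr_ge0; lra.
  nra.
have [hi|ihi] := ltP (mi + rj + t) xi.
  apply: Or32.
  have : 0 <= (1 - aj) * (xi - (mi + rj + t)) by apply: mulr_ge0; lra.
  have : 0 <= t * (1 / 2 - aj) by apply: mulr_ge0; lra.
  nra.
by apply: Or31; apply/andP.
Qed.

Section Threshold.
Context {R : realType} {gamma : R}.
Hypothesis gamma01 : 0 < gamma < 1.

Lemma ln_8_div_ge : 7 / 8 <= ln (8 / gamma).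
Proof.
have [g0 g1] := andP gamma01.
have := @le_ln1Dx R (gamma / 8 - 1); rewrite subrKC.
rewrite -[8 / gamma]invf_div lnV ?posrE ?divr_gt0 //.
move=> /(_ _); lra.
Qed.

Lemma threshold_gt12 : 12 < 100 * ln (8 / gamma) / gamma ^+ 2.
Proof.
have [g0 g1] := andP gamma01; have := ln_8_div_ge.
rewrite ltr_pdivlMr ?exprn_gt0 //; have : gamma ^+ 2 < 1 by rewrite expr_lt1 ?ltW.
nra.
Qed.

Lemma window_width {s} : 100 * ln (8 / gamma) / gamma ^+ 2 < s ->
  exists2 t, 0 < t & t / Num.sqrt s < gamma / 2 /\
                     expR (- (t / 2) ^+ 2 / (3 *+ 2)) = gamma / 4.
Proof.
move=> hs; have [g0 g1] := andP gamma01.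
have s0 : 0 < s by have := threshold_gt12; lra.
set L := ln (4 / gamma).
have L0 : 0 < L by apply: ln_gt0; rewrite ltr_pdivlMr //; lra.
have L8 : L <= ln (8 / gamma).
  by rewrite /L ler_ln ?posrE ?divr_gt0 // ler_pM2r ?invr_gt0 //; lra.
exists (Num.sqrt (24 * L)); first by rewrite sqrtr_gt0; lra.
have t2 : Num.sqrt (24 * L) ^+ 2 = 24 * L by rewrite sqr_sqrtr //; lra.
split.
  rewrite ltr_pdivrMr ?sqrtr_gt0 // -(ltr_pXn2r (isT : (0 < 2)%N)) ?nnegrE;
    last 2 first.
  - by rewrite sqrtr_ge0.
  - by rewrite mulr_ge0 ?sqrtr_ge0 ?divr_ge0 ?ltW.
  rewrite exprMn (sqr_sqrtr (ltW s0)) t2 expr_div_n.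
  move: hs; rewrite ltr_pdivrMr ?exprn_gt0 // => hs.
  have := ln_8_div_ge; nra.
have -> : - (Num.sqrt (24 * L) / 2) ^+ 2 / (3 *+ 2) = - L.
  by rewrite expr_div_n t2 -mulr_natr; field.
by rewrite expRN lnK ?posrE ?divr_gt0 // invf_div.
Qed.

End Threshold.

Lemma le_measure_cover3 {d} {T : measurableType d} {R : realFieldType}
    (mu : {measure set T -> \bar R}) {E A B C : set T} :
  measurable E -> measurable A -> measurable B -> measurable C ->
  E `<=` A `|` B `|` C -> (mu E <= mu A + mu B + mu C)%E.
Proof.
move=> mE mA mB mC EABC; have mAB := measurableU _ _ mA mB.
apply: le_trans (le_measure mu (mem_set mE) (mem_set (measurableU _ _ mAB mC)) EABC) _.
by apply: le_trans (measureU2 mu mAB mC) _; rewrite leeD2r // measureU2.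
Qed.

Definition regr {R : fieldType} {n} (Sigma : 'M[R]_n) (i x : 'I_n) : R :=
  Sigma x i / Sigma i i.

(* X_i = mu_i + crossing mu Sigma i x is where X_i meets the conditional mean
   mu_x + regr Sigma i x * (X_i - mu_i) of X_x. *)
Definition crossing {R : fieldType} {n} (mu : 'I_n -> R) (Sigma : 'M[R]_n)
    (i x : 'I_n) : R :=
  (mu x - mu i) / (1 - regr Sigma i x).

Section GaussianVector.
Context {R : realType} {d : measure_display} {T : measurableType d}.
Context {P : probability T R} {n : nat} {X : 'I_n -> {RV P >-> R}}.
Context {mu : 'I_n -> R} {Sigma : 'M[R]_n}.
Hypothesis X_gauss : is_gaussian_vector X mu Sigma.
Hypothesis Sigma_sym : Sigma^T = Sigma.
Hypothesis Sigma_psd : forall v : 'cV[R]_n, 0 <= (v^T *m Sigma *m v) 0 0.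
Implicit Types (x y : 'I_n) (b c : R) (B : set R).

Lemma Sigma_symE x y : Sigma x y = Sigma y x.
Proof. by rewrite -[in LHS]Sigma_sym mxE. Qed.

Lemma comb2_var_ge0 x y b c : 0 <= comb2_var Sigma x y b c.
Proof.
have := Sigma_psd (\col_l comb2 x y b c l); rewrite -quad_comb2 mxE.
congr (0 <= _); rewrite exchange_big; apply: eq_bigr => m _.
by rewrite !mxE mulr_suml; apply: eq_bigr => l _; rewrite !mxE.
Qed.

Lemma measurable_comb2 x y b c B : measurable B ->
  measurable [set w | B (b * X x w + c * X y w)].
Proof.
move=> mB; rewrite -[X in measurable X]setTI.
apply: (_ : measurable_fun setT (fun w => b * X x w + c * X y w)) => //.
by apply: measurable_funD; apply: measurable_funM.
Qed.

Lemma gauss_comb2 x y b c B : measurable B ->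
  P [set w | B (b * X x w + c * X y w)] =
  gauss_law (b * mu x + c * mu y) (comb2_var Sigma x y b c) B.
Proof.
move=> mB; rewrite -quad_comb2 -(sum_comb2 x y b c mu) -X_gauss //.
by congr (P _); apply/funext => w /=; rewrite (sum_comb2 x y b c (X^~ w)).
Qed.

Lemma gauss_coord x B : measurable B ->
  P [set w | B (X x w)] = gauss_law (mu x) (Sigma x x) B.
Proof.
move=> mB; have := gauss_comb2 x x 1 0 B mB.
rewrite comb2_var_coord mul1r mul0r addr0.
by under eq_fun do rewrite mul1r mul0r addr0.
Qed.

Lemma measurable_coord_lt x y : measurable [set w | X x w < X y w].
Proof.
rewrite -[X in measurable X]setTI.
exact: (measurable_fun_ltr (measurable_funP _) (measurable_funP _))
  measurableT [set true] I.
Qed.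

Lemma Sigma_diag_ge0 x : 0 <= Sigma x x.
Proof.
by have := comb2_var_ge0 x x 1 0; rewrite comb2_var_coord.
Qed.

Lemma comb2_var_resid i x : 0 < Sigma i i ->
  comb2_var Sigma x i 1 (- regr Sigma i x) =
  Sigma x x - Sigma x i ^+ 2 / Sigma i i.
Proof.
by move=> ii0; rewrite /comb2_var /regr (Sigma_symE i x); field; rewrite gt_eqF.
Qed.

Lemma resid_var_le i x : 0 < Sigma i i ->
  comb2_var Sigma x i 1 (- regr Sigma i x) <= Sigma x x.
Proof.
by move=> ii0; rewrite comb2_var_resid // gerBl divr_ge0 ?sqr_ge0 ?ltW.
Qed.

Lemma regr_le_half i x : 12 <= Sigma i i -> Sigma x x <= 3 ->
  regr Sigma i x <= 1 / 2.
Proof.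
move=> ii12 xx3; have ii0 : 0 < Sigma i i by lra.
have := comb2_var_ge0 x i 1 (- regr Sigma i x).
rewrite comb2_var_resid // subr_ge0 ler_pdivrMr // /regr ler_pdivrMr // => sq_le.
nra.
Qed.

Lemma prob_coord_window_le x m t : 0 < Sigma x x -> 0 <= t ->
  (P [set w | [set` `[(m - t)%R, (m + t)%R]] (X x w)]
    <= (t / Num.sqrt (Sigma x x))%:E)%E.
Proof.
move=> xx0 t0; rewrite gauss_coord; last exact: measurable_itv.
have mtt : m - t <= m + t by lra.
apply: le_trans (gauss_law_itv_le (mu x) _ _ _ xx0 mtt) _.
by rewrite lee_fin le_eqVlt -subr_eq0; apply/orP; left; apply/eqP; field;
  rewrite gt_eqF ?sqrtr_gt0.
Qed.

Lemma prob_comb2_tail_le {x y b c W u} : comb2_var Sigma x y b c <= W -> 0 < u ->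
  (P [set w | [set` `[(b * mu x + c * mu y + u)%R, +oo[] (b * X x w + c * X y w)%R]
    <= (expR (- u ^+ 2 / (W *+ 2)))%:E)%E.
Proof.
move=> varW u0; rewrite gauss_comb2; last exact: measurable_itv.
by apply: gauss_law_tail_le => //; rewrite comb2_var_ge0.
Qed.

Lemma middle_prob_lt gamma i j k : 0 < gamma < 1 ->
  Sigma j j <= 3 -> Sigma k k <= 3 ->
  100 * ln (8 / gamma) / gamma ^+ 2 < Sigma i i ->
  crossing mu Sigma i j <= crossing mu Sigma i k ->
  (P [set w | (X i w < X j w)%R /\ (X k w < X i w)%R] < gamma%:E)%E.
Proof.
move=> g01 jj3 kk3 big cross_jk.
have ii12 : 12 < Sigma i i := lt_trans (threshold_gt12 g01) big.
have ii0 : 0 < Sigma i i by lra.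
have [t t0 [window tail]] := window_width g01 big.
have t2_0 : 0 < t / 2 by lra.
have resid3 x : Sigma x x <= 3 -> comb2_var Sigma x i 1 (- regr Sigma i x) <= 3.
  by move=> xx3; apply: le_trans (resid_var_le i x ii0) xx3.
have aj2 := regr_le_half i j (ltW ii12) jj3.
have ak2 := regr_le_half i k (ltW ii12) kk3.
have crossingE x : regr Sigma i x <= 1 / 2 ->
    (1 - regr Sigma i x) * crossing mu Sigma i x = mu x - mu i.
  by move=> ax2; rewrite /crossing mulrC divfK // gt_eqF // subr_gt0; lra.
set aj := regr Sigma i j in aj2 resid3 *; set ak := regr Sigma i k in ak2 resid3 *.
set rj := crossing mu Sigma i j in cross_jk *.
set A := [set w | [set` `[mu i + rj - t, mu i + rj + t]] (X i w)].
set B := [set w | [set` `[1 * mu j + - aj * mu i + t / 2, +oo[]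
                    (1 * X j w + - aj * X i w)].
set C := [set w | [set` `[-1 * mu k + ak * mu i + t / 2, +oo[]
                    (-1 * X k w + ak * X i w)].
have sub : [set w | X i w < X j w /\ X k w < X i w] `<=` A `|` B `|` C.
  move=> w [ij ki]; have := middle_rank_cases aj2 ak2 t0 cross_jk
    (crossingE _ aj2) (crossingE _ ak2) ij ki.
  by case=> h; [left; left | left; right | right];
    rewrite /A /B /C /= in_itv /= ?h ?andbT.
have PA : (P A <= (t / Num.sqrt (Sigma i i))%:E)%E.
  exact: prob_coord_window_le i _ _ ii0 (ltW t0).
have PB : (P B <= (gamma / 4)%:E)%E.
  by rewrite -tail; exact: prob_comb2_tail_le (resid3 j jj3) t2_0.
have PC : (P C <= (gamma / 4)%:E)%E.
  rewrite -tail; apply: prob_comb2_tail_le t2_0.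
  by rewrite -comb2_varN opprK resid3.
apply: le_lt_trans (le_measure_cover3 P _ _ _ _ sub) _.
- exact: measurableI (measurable_coord_lt i j) (measurable_coord_lt k i).
- exact: measurable_funPTI.
- exact: measurable_comb2.
- exact: measurable_comb2.
apply: le_lt_trans (leeD (leeD PA PB) PC) _.
by rewrite -!EFinD lte_fin; lra.
Qed.

End GaussianVector.

Theorem lemma10 (R : realType) (d : measure_display) (T : measurableType d)
  (P : probability T R) (n : nat) (X : 'I_n -> {RV P >-> R})
  (mu : 'I_n -> R) (Sigma : 'M[R]_n) (gamma : R) :
  (3 <= n)%N ->
  Sigma^T = Sigma ->
  (forall v : 'cV[R]_n, 0 <= (v^T *m Sigma *m v) 0 0) ->
  is_gaussian_vector X mu Sigma ->
  \sum_(i < n) mu i = 0 ->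
  (forall i : 'I_n, \sum_(j < n) Sigma i j = 0) ->
  \tr Sigma = n%:R ->
  \rank Sigma = n.-1 ->
  0 < gamma < 1 ->
  (forall i j k : 'I_n, i != j -> j != k -> i != k ->
     (gamma%:E <= P [set w | (X j w < X i w)%R /\ (X k w < X j w)%R])%E) ->
  forall i : 'I_n, Sigma i i <= 100 * ln (8 / gamma) / gamma ^+ 2.
Proof.
move=> n3 Sigma_sym Sigma_psd X_gauss _ _ trace _ g01 observable i.
rewrite leNgt; apply/negP => big.
have [j [k [ji ki jk jj3 kk3]]] :=
  two_small_besides n3 (Sigma_diag_ge0 Sigma_psd) trace i.
have [ij ik kj] : [/\ i != j, i != k & k != j] by split; rewrite eq_sym.
have [cjk|ckj] := leP (crossing mu Sigma i j) (crossing mu Sigma i k).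
  have := middle_prob_lt X_gauss Sigma_sym Sigma_psd _ i j k g01 jj3 kk3 big cjk.
  by rewrite ltNge (observable j i k ji ik jk).
have := middle_prob_lt X_gauss Sigma_sym Sigma_psd _ i k j g01 kk3 jj3 big (ltW ckj).
by rewrite ltNge (observable k i j ki ij kj).
Qed.
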